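(* There exist binary Euclidean LCD codes with parameters $[30,11,9]$, $[30,15,7]$ and $[33,11,11]$.
   Context: A binary $[n,k,d]$ code is a $k$-dimensional subspace $C\subseteq\mathbb{F}_2^n$ with minimum nonzero Hamming weight $d$; it is Euclidean LCD if $C\cap C^{\perp_E}=\{0\}$, where $C^{\perp_E}$ is the dual with respect to $\langle x,y\rangle_E=\sum x_iy_i$. *)

From mathcomp Require Import all_boot all_algebra.
Set Implicit Arguments. Unset Strict Implicit. Unset Printing Implicit Defensive.
Import GRing.Theory.
Local Open Scope ring_scope.

Definition hwt (n : nat) (x : 'rV['F_2]_n) : nat := #|[set i | x 0 i != 0]|.

Definition eip (n : nat) (x y : 'rV['F_2]_n) : 'F_2 := \sum_(i < n) x 0 i * y 0 i.

Definition is_binary_code (n k d : nat) (C : {vspace 'rV['F_2]_n}) : Prop :=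
  [/\ \dim C = k,
      (exists2 c, c \in C & (c != 0) && (hwt c == d))
    & forall c, c \in C -> c != 0 -> (d <= hwt c)%N].

Definition eu_dual (n : nat) (C : {vspace 'rV['F_2]_n}) : pred 'rV['F_2]_n :=
  fun x => [forall y, (y \in C) ==> (eip x y == 0)].

Definition euclidean_LCD (n : nat) (C : {vspace 'rV['F_2]_n}) : Prop :=
  forall x, x \in C -> eu_dual C x -> x = 0.

Arguments is_binary_code n k d C : clear implicits.

From mathcomp Require Import all_boot all_algebra.
Set Implicit Arguments. Unset Strict Implicit. Unset Printing Implicit Defensive.
Import GRing.Theory.
Local Open Scope ring_scope.

(* Each code is the span of an explicit generator matrix in systematic form.
   Its 2^k codewords are enumerated by computation: this gives the dimension
   (the rows are free thanks to their pivots), the minimum weight, and the LCD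
   property, which holds as soon as every nonzero codeword is non-orthogonal to
   one of the generators, since a vector of C^perp is orthogonal to all of them. *)

Lemma F2_cases (k : 'F_2) : k = 0 \/ k = 1.
Proof. case: k => [[|[|m]] Hm]; [left|right|by []]; exact/val_inj. Qed.

Lemma hwt_eq0 n (x : 'rV['F_2]_n) : (hwt x == 0%N) = (x == 0).
Proof.
apply/idP/eqP => [/eqP/cards0_eq x0 | ->].
  apply/rowP => i; rewrite mxE; apply/eqP/negPn/negP => xi.
  by have := in_set0 i; rewrite -x0 inE xi.
rewrite /hwt (_ : [set i | _] = set0) ?cards0 //.
by apply/setP => i; rewrite !inE mxE eqxx.
Qed.

Lemma LCD_span n (gs : seq 'rV['F_2]_n) :
  (forall c, c \in <<gs>>%VS -> c != 0 -> has (fun g => eip c g != 0) gs) ->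
  euclidean_LCD <<gs>>%VS.
Proof.
move=> witness c cC /forallP c_dual; apply/eqP/negPn/negP => c0.
have /hasP [g g_gs /negP[]] := witness c cC c0.
by have /implyP := c_dual g; apply; rewrite memv_span.
Qed.

Definition bit (b : bool) : 'F_2 := b%:R.

Lemma bitD x y : bit (x (+) y) = bit x + bit y.
Proof. by case: x; case: y; apply/val_inj. Qed.

Lemma bitM x y : bit (x && y) = bit x * bit y.
Proof. by case: x; case: y; apply/val_inj. Qed.

Lemma bit_eq0 b : (bit b == 0) = ~~ b.
Proof. by case: b. Qed.

Section BitLists.
Variable n : nat.

Definition bits_row (s : seq bool) : 'rV['F_2]_n := \row_(i < n) bit (nth false s i).

Fixpoint xor_bits (a b : seq bool) : seq bool :=
  match a, b with
  | x :: a', y :: b' => (x (+) y) :: xor_bits a' b'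
  | [::], _ => b
  | _, [::] => a
  end.

(* Plain [count]/[foldr] rather than bigops, which are locked and would block
   [vm_compute]. *)
Definition bits_weight (s : seq bool) : nat := count (nth false s) (iota 0 n).

Definition bits_dot (a b : seq bool) : bool :=
  foldr addb false [seq nth false a i && nth false b i | i <- iota 0 n].

Lemma nth_xor_bits a b i :
  nth false (xor_bits a b) i = nth false a i (+) nth false b i.
Proof. by elim: a b i => [|x a IH] [|y b] [|i] //=; rewrite ?addbF. Qed.

Lemma bits_row_nil : bits_row [::] = 0.
Proof. by apply/rowP => i; rewrite !mxE nth_nil. Qed.

Lemma bits_row_xor a b : bits_row (xor_bits a b) = bits_row a + bits_row b.
Proof. by apply/rowP => i; rewrite !mxE nth_xor_bits bitD. Qed.

Lemma hwt_bits_row s : hwt (bits_row s) = bits_weight s.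
Proof.
rewrite /hwt /bits_weight cardsE cardE size_filter -val_enum_ord count_map enumT.
by apply: eq_count => i; rewrite -[LHS]/(bits_row s 0 i != 0) mxE bit_eq0 negbK.
Qed.

Lemma eip_bits_row a b : eip (bits_row a) (bits_row b) = bit (bits_dot a b).
Proof.
rewrite /eip (eq_bigr (fun i : 'I_n => bit (nth false a i && nth false b i))).
  rewrite -(big_mkord xpredT (fun i => bit (nth false a i && nth false b i))).
  by rewrite /bits_dot foldrE big_map (big_morph bit bitD (erefl (bit false))) /index_iota subn0.
by move=> i _; rewrite !mxE bitM.
Qed.

Definition bits_span (gs : seq (seq bool)) : {vspace 'rV['F_2]_n} :=
  <<map bits_row gs>>%VS.

Fixpoint all_comb (P : pred (seq bool)) (gs : seq (seq bool)) (acc : seq bool) :=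
  if gs is g :: gs' then all_comb P gs' acc && all_comb P gs' (xor_bits acc g)
  else P acc.

Fixpoint has_comb (P : pred (seq bool)) (gs : seq (seq bool)) (acc : seq bool) :=
  if gs is g :: gs' then has_comb P gs' acc || has_comb P gs' (xor_bits acc g)
  else P acc.

Lemma all_combP P gs acc : all_comb P gs acc ->
  forall c, c \in bits_span gs -> exists2 s, P s & bits_row acc + c = bits_row s.
Proof.
elim: gs acc => [|g gs IH] acc /=.
  by move=> Pacc c; rewrite /bits_span span_nil memv0 => /eqP->; exists acc; rewrite ?addr0.
case/andP=> P0 P1 c; rewrite /bits_span /= span_cons => /memv_addP[_ /vlineP[k ->] [v vgs ->]].
case: (F2_cases k) => ->; first by rewrite scale0r add0r; apply: IH.
by rewrite scale1r addrA -bits_row_xor; apply: IH.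
Qed.

Lemma has_combP P gs acc : has_comb P gs acc ->
  exists2 c, c \in bits_span gs & exists2 s, P s & bits_row acc + c = bits_row s.
Proof.
elim: gs acc => [|g gs IH] acc /=.
  by move=> Pacc; exists 0; [exact: mem0v | exists acc; rewrite ?addr0].
rewrite /bits_span /= span_cons.
case/orP=> /IH[c cgs [s Ps Es]].
  by exists c; [rewrite -[c]add0r memv_add ?mem0v | exists s].
exists (bits_row g + c); first by apply: memv_add; [exact: memv_line |].
by exists s; rewrite // addrA -bits_row_xor.
Qed.

Fixpoint has_pivots (j : nat) (gs : seq (seq bool)) : bool :=
  if gs is g :: gs' then
    [&& (j < n)%N, nth false g j, all_comb (fun s => ~~ nth false s j) gs' [::]
      & has_pivots j.+1 gs']
  else true.

Lemma has_pivots_free j gs : has_pivots j gs -> free (map bits_row gs).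
Proof.
elim: gs j => [|g gs IH] j /=; first by rewrite nil_free.
case/and4P=> lt_j_n gj later_j0 /IH free_gs; rewrite free_cons free_gs andbT.
apply/negP => /(all_combP later_j0)[s sj0].
rewrite bits_row_nil add0r => /rowP/(_ (Ordinal lt_j_n)); rewrite !mxE /= gj.
by move: sj0; case: (nth false s j).
Qed.

Lemma dim_bits_span gs : has_pivots 0 gs -> \dim (bits_span gs) = size gs.
Proof. by move/has_pivots_free/eqP; rewrite size_map. Qed.

Lemma bits_span_LCD_code k d gs :
  size gs = k -> has_pivots 0 gs -> (0 < d)%N ->
  has_comb (fun s => bits_weight s == d) gs [::] ->
  all_comb (fun s => (bits_weight s == 0%N) ||
                     (d <= bits_weight s)%N && has (bits_dot s) gs) gs [::] ->
  is_binary_code n k d (bits_span gs) /\ euclidean_LCD (bits_span gs).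
Proof.
move=> <- pivots d_gt0 has_d all_ok.
have codeword c : c \in bits_span gs -> c != 0 ->
    (d <= hwt c)%N /\ has (fun g => eip c g != 0) (map bits_row gs).
  move=> cC; have [s /orP ok_s] := all_combP all_ok cC.
  rewrite bits_row_nil add0r => ->; rewrite -hwt_eq0 hwt_bits_row.
  case: ok_s => [-> // | /andP[d_le /hasP[g g_gs dot_sg]] _]; split=> //.
  by apply/hasP; exists (bits_row g); rewrite ?map_f // eip_bits_row bit_eq0 dot_sg.
split; first split.
- exact: dim_bits_span.
- have [c cC [s /eqP wt_s]] := has_combP has_d.
  rewrite bits_row_nil add0r => c_s; exists c => //.
  by rewrite -hwt_eq0 c_s hwt_bits_row wt_s eqxx andbT -lt0n.
- by move=> c cC /(codeword c cC)[].
- by apply: LCD_span => c cC /(codeword c cC)[].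
Qed.

End BitLists.

Definition G30_11 : seq (seq bool) := map (map (eqn 1)) [::
  [:: 1; 0; 0; 0; 0; 0; 0; 0; 0; 0; 0; 1; 1; 1; 1; 0; 0; 0; 1; 1; 0; 0; 1; 1; 0; 1; 0; 1; 1; 1];
  [:: 0; 1; 0; 0; 0; 0; 0; 0; 0; 0; 0; 0; 1; 1; 1; 0; 0; 0; 0; 1; 1; 0; 0; 1; 1; 0; 1; 0; 0; 1];
  [:: 0; 0; 1; 0; 0; 0; 0; 0; 0; 0; 0; 1; 0; 1; 1; 1; 0; 0; 0; 0; 1; 1; 0; 0; 1; 1; 0; 1; 1; 0];
  [:: 0; 0; 0; 1; 0; 0; 0; 0; 0; 0; 0; 1; 1; 0; 1; 1; 1; 0; 0; 0; 0; 1; 1; 0; 0; 1; 1; 0; 0; 1];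
  [:: 0; 0; 0; 0; 1; 0; 0; 0; 0; 0; 0; 0; 1; 1; 0; 1; 1; 1; 0; 0; 0; 0; 1; 1; 0; 0; 1; 1; 1; 0];
  [:: 0; 0; 0; 0; 0; 1; 0; 0; 0; 0; 0; 0; 0; 1; 1; 1; 1; 1; 1; 0; 0; 1; 0; 1; 1; 0; 0; 1; 0; 1];
  [:: 0; 0; 0; 0; 0; 0; 1; 0; 0; 0; 0; 0; 0; 0; 1; 0; 1; 1; 1; 1; 0; 0; 1; 0; 1; 1; 0; 0; 1; 0];
  [:: 0; 0; 0; 0; 0; 0; 0; 1; 0; 0; 0; 0; 0; 0; 0; 1; 0; 1; 1; 1; 1; 1; 0; 1; 0; 1; 1; 0; 1; 1];
  [:: 0; 0; 0; 0; 0; 0; 0; 0; 1; 0; 0; 1; 0; 0; 0; 1; 1; 0; 1; 1; 1; 0; 1; 0; 1; 0; 1; 1; 0; 1];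
  [:: 0; 0; 0; 0; 0; 0; 0; 0; 0; 1; 0; 1; 1; 0; 0; 0; 1; 1; 0; 1; 1; 1; 0; 1; 0; 1; 0; 1; 0; 0];
  [:: 0; 0; 0; 0; 0; 0; 0; 0; 0; 0; 1; 1; 1; 1; 0; 0; 0; 1; 1; 0; 1; 1; 1; 0; 1; 0; 1; 0; 1; 0]].

Definition G30_15 : seq (seq bool) := map (map (eqn 1)) [::
  [:: 1; 0; 0; 0; 0; 0; 0; 0; 0; 0; 0; 0; 0; 0; 0; 0; 1; 1; 1; 1; 1; 1; 1; 1; 1; 1; 1; 1; 1; 1];
  [:: 0; 1; 0; 0; 0; 0; 0; 0; 0; 0; 0; 0; 0; 0; 0; 1; 0; 1; 1; 1; 1; 0; 1; 0; 0; 0; 1; 0; 0; 0];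
  [:: 0; 0; 1; 0; 0; 0; 0; 0; 0; 0; 0; 0; 0; 0; 0; 1; 0; 0; 1; 1; 1; 1; 0; 1; 0; 0; 0; 1; 0; 0];
  [:: 0; 0; 0; 1; 0; 0; 0; 0; 0; 0; 0; 0; 0; 0; 0; 1; 0; 0; 0; 1; 1; 1; 1; 0; 1; 0; 0; 0; 1; 0];
  [:: 0; 0; 0; 0; 1; 0; 0; 0; 0; 0; 0; 0; 0; 0; 0; 1; 0; 0; 0; 0; 1; 1; 1; 1; 0; 1; 0; 0; 0; 1];
  [:: 0; 0; 0; 0; 0; 1; 0; 0; 0; 0; 0; 0; 0; 0; 0; 1; 1; 0; 0; 0; 0; 1; 1; 1; 1; 0; 1; 0; 0; 0];
  [:: 0; 0; 0; 0; 0; 0; 1; 0; 0; 0; 0; 0; 0; 0; 0; 1; 0; 1; 0; 0; 0; 0; 1; 1; 1; 1; 0; 1; 0; 0];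
  [:: 0; 0; 0; 0; 0; 0; 0; 1; 0; 0; 0; 0; 0; 0; 0; 1; 0; 0; 1; 0; 0; 0; 0; 1; 1; 1; 1; 0; 1; 0];
  [:: 0; 0; 0; 0; 0; 0; 0; 0; 1; 0; 0; 0; 0; 0; 0; 1; 0; 0; 0; 1; 0; 0; 0; 0; 1; 1; 1; 1; 0; 1];
  [:: 0; 0; 0; 0; 0; 0; 0; 0; 0; 1; 0; 0; 0; 0; 0; 1; 1; 0; 0; 0; 1; 0; 0; 0; 0; 1; 1; 1; 1; 0];
  [:: 0; 0; 0; 0; 0; 0; 0; 0; 0; 0; 1; 0; 0; 0; 0; 1; 0; 1; 0; 0; 0; 1; 0; 0; 0; 0; 1; 1; 1; 1];
  [:: 0; 0; 0; 0; 0; 0; 0; 0; 0; 0; 0; 1; 0; 0; 0; 1; 1; 0; 1; 0; 0; 0; 1; 0; 0; 0; 0; 1; 1; 1];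
  [:: 0; 0; 0; 0; 0; 0; 0; 0; 0; 0; 0; 0; 1; 0; 0; 1; 1; 1; 0; 1; 0; 0; 0; 1; 0; 0; 0; 0; 1; 1];
  [:: 0; 0; 0; 0; 0; 0; 0; 0; 0; 0; 0; 0; 0; 1; 0; 1; 1; 1; 1; 0; 1; 0; 0; 0; 1; 0; 0; 0; 0; 1];
  [:: 0; 0; 0; 0; 0; 0; 0; 0; 0; 0; 0; 0; 0; 0; 1; 1; 1; 1; 1; 1; 0; 1; 0; 0; 0; 1; 0; 0; 0; 0]].

Definition G33_11 : seq (seq bool) := map (map (eqn 1)) [::
  [:: 1; 0; 0; 0; 0; 0; 0; 0; 0; 0; 0; 1; 1; 0; 1; 1; 1; 1; 0; 0; 1; 0; 0; 1; 1; 0; 1; 0; 1; 0; 1; 1; 1];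
  [:: 0; 1; 0; 0; 0; 0; 0; 0; 0; 0; 0; 0; 1; 1; 0; 1; 1; 1; 1; 0; 0; 1; 1; 0; 1; 1; 0; 1; 0; 1; 0; 1; 1];
  [:: 0; 0; 1; 0; 0; 0; 0; 0; 0; 0; 0; 1; 0; 1; 1; 0; 1; 1; 1; 1; 0; 0; 1; 1; 0; 1; 1; 0; 1; 0; 1; 0; 1];
  [:: 0; 0; 0; 1; 0; 0; 0; 0; 0; 0; 0; 0; 1; 0; 1; 1; 0; 1; 1; 1; 1; 0; 1; 1; 1; 0; 1; 1; 0; 1; 0; 1; 0];
  [:: 0; 0; 0; 0; 1; 0; 0; 0; 0; 0; 0; 0; 0; 1; 0; 1; 1; 0; 1; 1; 1; 1; 0; 1; 1; 1; 0; 1; 1; 0; 1; 0; 1];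
  [:: 0; 0; 0; 0; 0; 1; 0; 0; 0; 0; 0; 1; 0; 0; 1; 0; 1; 1; 0; 1; 1; 1; 1; 0; 1; 1; 1; 0; 1; 1; 0; 1; 0];
  [:: 0; 0; 0; 0; 0; 0; 1; 0; 0; 0; 0; 1; 1; 0; 0; 1; 0; 1; 1; 0; 1; 1; 0; 1; 0; 1; 1; 1; 0; 1; 1; 0; 1];
  [:: 0; 0; 0; 0; 0; 0; 0; 1; 0; 0; 0; 1; 1; 1; 0; 0; 1; 0; 1; 1; 0; 1; 1; 0; 1; 0; 1; 1; 1; 0; 1; 1; 0];
  [:: 0; 0; 0; 0; 0; 0; 0; 0; 1; 0; 0; 1; 1; 1; 1; 0; 0; 1; 0; 1; 1; 0; 0; 1; 0; 1; 0; 1; 1; 1; 0; 1; 1];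
  [:: 0; 0; 0; 0; 0; 0; 0; 0; 0; 1; 0; 0; 1; 1; 1; 1; 0; 0; 1; 0; 1; 1; 1; 0; 1; 0; 1; 0; 1; 1; 1; 0; 1];
  [:: 0; 0; 0; 0; 0; 0; 0; 0; 0; 0; 1; 1; 0; 1; 1; 1; 1; 0; 0; 1; 0; 1; 1; 1; 0; 1; 0; 1; 0; 1; 1; 1; 0]].

Theorem proposition4p6 :
  [/\ exists C : {vspace 'rV['F_2]_30}, is_binary_code 30 11 9 C /\ euclidean_LCD C,
      exists C : {vspace 'rV['F_2]_30}, is_binary_code 30 15 7 C /\ euclidean_LCD C
    & exists C : {vspace 'rV['F_2]_33}, is_binary_code 33 11 11 C /\ euclidean_LCD C].
Proof.
split; [exists (bits_span 30 G30_11) | exists (bits_span 30 G30_15)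
       | exists (bits_span 33 G33_11)];
  by apply: bits_span_LCD_code; vm_compute.
Qed.
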